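(* Let $G$ be an additive subgroup of $\mathbb{C}$ with $\mathrm{rank}\,G\ge 2$, and let $V$ be a nontrivial irreducible Harish-Chandra module over $\mathrm{Vir}[G]$. Let $I$ be a finite subset of $\mathrm{supp}V$ and let $G_I$ be a subgroup of $G$ such that (a) $G_I\cong\mathbb{Z}^k$ for some $k\in\mathbb{N}$, (b) $U(G_I)V_\mu=U(G_I)V_{\mu'}$ and $\mu-\mu'\in G_I$ for all $\mu,\mu'\in I$, and (c) $V_\mu$ is an irreducible $U(G_I)_0$-module for every $\mu\in I$. Let $G'$ be a subgroup of $G$ containing $G_I$. Then for any $\lambda\in I$, the $\mathrm{Vir}[G']$-module $V_{\lambda+G'}$ has a unique irreducible $\mathrm{Vir}[G']$-subquotient $V'$ with $\dim V'_\mu=\dim V_\mu$ for all $\mu\in I$.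
   Context: $\mathbb{N}$ denotes the positive integers. For a nonzero additive subgroup $G$ of $\mathbb{C}$, $\mathrm{Vir}[G]$ is the complex Lie algebra with basis $\{C,d_x:x\in G\}$ and brackets $[d_x,d_y]=(y-x)d_{x+y}+\delta_{x,-y}\frac{x^3-x}{12}C$, $[C,d_x]=0$; for a subgroup $H\subseteq G$, $\mathrm{Vir}[H]$ is the subalgebra spanned by $C$ and $d_x$, $x\in H$. $U(H)$ is the universal enveloping algebra of $\mathrm{Vir}[H]$, and $U(H)_a=\{y\in U(H):[d_0,y]=ay\}$. The rank of a subgroup $A$ of $\mathbb{C}$ is the maximal $r$ such that there exist nonzero $g_1,\dots,g_r\in A$ with $\mathbb{Z}g_1+\dots+\mathbb{Z}g_r$ a direct sum. For a module $V$ on which $C$ acts as a scalar, $V_\lambda=\{v:d_0v=\lambda v\}$; weight module: sum of weight spaces; Harish-Chandra: weight module with finite-dimensional weight spaces; $\mathrm{supp}V=\{\lambda:V_\lambda\ne0\}$; trivial: $\mathrm{Vir}[G]V=0$. For $S\subseteq\mathbb{C}$, $V_S=\bigoplus_{x\in S}V_x$; for a subgroup $H$ and $\lambda\in\mathbb{C}$, $V_{\lambda+H}$ is a $\mathrm{Vir}[H]$-module. A subquotient of a module is $W/W'$ for submodules $W'\subseteq W$. *)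

From HB Require Import structures.
From mathcomp Require Import all_boot all_order all_algebra.
From mathcomp Require Import complex Rstruct.
Set Implicit Arguments. Unset Strict Implicit. Unset Printing Implicit Defensive.
Import Order.TTheory GRing.Theory Num.Theory.
Local Open Scope ring_scope.

Notation CC := (complex Rdefinitions.R).

Section Defs.
Variable V : lmodType CC.

Definition is_subgroup (H : CC -> Prop) : Prop :=
  H 0 /\ (forall x y, H x -> H y -> H (x - y)).

Definition rank_ge (A : CC -> Prop) (r : nat) : Prop :=
  exists g : 'I_r -> CC, (forall i, A (g i) /\ g i != 0) /\
    forall m : 'I_r -> int, \sum_(i < r) (g i *~ m i) = 0 ->
      forall i, g i *~ m i = 0.

Definition iso_Zk (H : CC -> Prop) (k : nat) : Prop :=
  exists g : 'I_k -> CC,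
    (forall x, H x <-> exists m : 'I_k -> int, x = \sum_(i < k) (g i *~ m i)) /\
    (forall m : 'I_k -> int, \sum_(i < k) (g i *~ m i) = 0 -> forall i, m i = 0).

(* A module over Vir[G] on V: d_x acts by D x (x in G), the central element C
   acts by Cop. D is meaningful only on G. *)
Definition lin (f : V -> V) : Prop := forall (a : CC) (u v : V), f (a *: u + v) = a *: f u + f v.

Definition vir_module (G : CC -> Prop) (D : CC -> V -> V) (Cop : V -> V) : Prop :=
  lin Cop /\ (forall x, G x -> lin (D x)) /\
  (forall x v, G x -> Cop (D x v) = D x (Cop v)) /\
  (forall x y v, G x -> G y ->
     D x (D y v) - D y (D x v) =
       (y - x) *: D (x + y) v +
       (if x == - y then ((x ^+ 3 - x) / 12%:R) *: Cop v else 0)).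

Definition subspace (S : V -> Prop) : Prop :=
  S 0 /\ forall (a : CC) u v, S u -> S v -> S (a *: u + v).

Definition submodule (H : CC -> Prop) (D : CC -> V -> V) (Cop : V -> V)
  (S : V -> Prop) : Prop :=
  subspace S /\ (forall x v, H x -> S v -> S (D x v)) /\ (forall v, S v -> S (Cop v)).

Definition weight (D : CC -> V -> V) (lam : CC) (v : V) : Prop := D 0 v = lam *: v.

Definition wspan (D : CC -> V -> V) (S : CC -> Prop) (v : V) : Prop :=
  exists s : seq (CC * V), (forall p, p \in s -> S p.1 /\ weight D p.1 p.2) /\
    v = \sum_(p <- s) p.2.

Definition in_supp (D : CC -> V -> V) (lam : CC) : Prop :=
  exists v, v != 0 /\ weight D lam v.

Definition fin_dim (S : V -> Prop) : Prop :=
  exists s : seq V, (forall v, v \in s -> S v) /\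
    forall v, S v -> exists a : 'I_(size s) -> CC, v = \sum_(i < size s) a i *: s`_i.

Definition irreducible_vir (G : CC -> Prop) (D : CC -> V -> V) (Cop : V -> V) : Prop :=
  (exists v : V, v != 0) /\
  forall S, submodule G D Cop S -> (forall v, S v -> v = 0) \/ (forall v, S v).

Definition harish_chandra (G : CC -> Prop) (D : CC -> V -> V) (Cop : V -> V) : Prop :=
  (exists c : CC, forall v, Cop v = c *: v) /\
  (forall v, wspan D (fun _ => True) v) /\
  (forall lam, fin_dim (weight D lam)).

Definition nontrivial (G : CC -> Prop) (D : CC -> V -> V) (Cop : V -> V) : Prop :=
  exists v, (exists x, G x /\ D x v != 0) \/ Cop v != 0.

(* Monomials of U(H): words in the letters d_x (Some x) and C (None). *)
Definition word_act (D : CC -> V -> V) (Cop : V -> V) (w : seq (option CC)) (v : V) : V :=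
  foldr (fun l u => match l with Some x => D x u | None => Cop u end) v w.

Definition word_in (H : CC -> Prop) (w : seq (option CC)) : Prop :=
  forall l, l \in w -> match l with Some x => H x | None => True end.

Definition word_weight (w : seq (option CC)) : CC :=
  \sum_(l <- w) match l with Some x => x | None => 0 end.

(* U(H) S : the Vir[H]-submodule generated by S = span of monomials applied to S *)
Definition U_gen (H : CC -> Prop) (D : CC -> V -> V) (Cop : V -> V)
  (S : V -> Prop) (v : V) : Prop :=
  exists s : seq (CC * seq (option CC) * V),
    (forall p, p \in s -> word_in H p.1.2 /\ S p.2) /\
    v = \sum_(p <- s) p.1.1 *: word_act D Cop p.1.2 p.2.

(* V_mu is an irreducible U(H)_0-module; U(H)_0 is spanned by the monomials of
   ad d_0-weight 0 *)
Definition irreducible_U0 (H : CC -> Prop) (D : CC -> V -> V) (Cop : V -> V)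
  (mu : CC) : Prop :=
  (exists v, v != 0 /\ weight D mu v) /\
  forall S : V -> Prop, subspace S -> (forall v, S v -> weight D mu v) ->
    (forall w v, word_in H w -> word_weight w = 0 -> S v -> S (word_act D Cop w v)) ->
    (forall v, S v -> v = 0) \/ (forall v, weight D mu v -> S v).

Definition subquotient (H : CC -> Prop) (D : CC -> V -> V) (Cop : V -> V)
  (M W W' : V -> Prop) : Prop :=
  submodule H D Cop W /\ submodule H D Cop W' /\
  (forall v, W' v -> W v) /\ (forall v, W v -> M v).

Definition irreducible_quot (H : CC -> Prop) (D : CC -> V -> V) (Cop : V -> V)
  (W W' : V -> Prop) : Prop :=
  (exists v, W v /\ ~ W' v) /\
  forall X, submodule H D Cop X -> (forall v, W' v -> X v) -> (forall v, X v -> W v) ->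
    (forall v, X v -> W' v) \/ (forall v, W v -> X v).

(* dim (W/W')_mu = n *)
Definition qdim (D : CC -> V -> V) (W W' : V -> Prop) (mu : CC) (n : nat) : Prop :=
  exists b : 'I_n -> V,
    (forall i, W (b i) /\ W' (D 0 (b i) - mu *: b i)) /\
    (forall a : 'I_n -> CC, W' (\sum_(i < n) a i *: b i) -> forall i, a i = 0) /\
    (forall v, W v -> W' (D 0 v - mu *: v) ->
       exists a : 'I_n -> CC, W' (v - \sum_(i < n) a i *: b i)).

Definition quot_iso (H : CC -> Prop) (D : CC -> V -> V) (Cop : V -> V)
  (W1 W1' W2 W2' : V -> Prop) : Prop :=
  exists f : V -> V,
    (forall (a : CC) u v, W1 u -> W1 v -> f (a *: u + v) = a *: f u + f v) /\
    (forall v, W1 v -> W2 (f v)) /\ (forall v, W1' v -> W2' (f v)) /\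
    (forall x v, H x -> W1 v -> W2' (f (D x v) - D x (f v))) /\
    (forall v, W1 v -> W2' (f (Cop v) - Cop (f v))) /\
    (forall v, W1 v -> W2' (f v) -> W1' v) /\
    (forall w, W2 w -> exists v, W1 v /\ W2' (f v - w)).

End Defs.

(* Let M = V_(lam + G').  Every weight space V_mu, mu in I, is an irreducible
   U(G_I)_0-module, so every Vir[G']-submodule of V either contains V_mu or
   meets it trivially.  Take for W' ([bot_sq]) the largest submodule of M
   meeting V_lam trivially, i.e. the v in M none of whose translates u v,
   u in U(G'), has a component of weight lam, and W := U(G') V_lam + W'
   ([top_sq]).  The dichotomy makes W/W' irreducible, and since
   U(G_I) V_mu = U(G_I) V_lam it gives V_mu in W and V_mu meeting W' trivially,
   hence (W/W')_mu = V_mu.  Conversely, if X/X' is irreducible with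
   (X/X')_lam nonzero then V_lam lies in X and misses X', so X' is inside W',
   U(G') V_lam + X' = X and X meets W' in X': the identity of V induces
   X/X' = W/W'.  Weight components are extracted from D_0-stable subspaces by
   a Vandermonde argument. *)

From HB Require Import structures.
From mathcomp Require Import all_boot all_order all_algebra.
From mathcomp Require Import complex Rstruct.
From Stdlib Require Import Classical ClassicalEpsilon.
Set Implicit Arguments. Unset Strict Implicit.
Import Order.TTheory GRing.Theory Num.Theory.
Local Open Scope ring_scope.

Section Subgroup.
Variable H : CC -> Prop.
Hypothesis HH : is_subgroup H.

Lemma subgroup0 : H 0.
Proof. by case: HH. Qed.

Lemma subgroupN x : H x -> H (- x).
Proof. by case: HH => H0 HB Hx; rewrite -sub0r; apply: HB. Qed.

Lemma subgroupD x y : H x -> H y -> H (x + y).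
Proof. by case: HH => _ HB Hx Hy; rewrite -[y]opprK; apply/HB/subgroupN. Qed.

End Subgroup.

Section LinearMaps.
Variable V : lmodType CC.
Implicit Types (f : V -> V) (S : V -> Prop).

Lemma lin0 f : lin f -> f 0 = 0.
Proof.
move=> hf; have := hf 1 0 0; rewrite !scale1r addr0 => /(congr1 (fun x => x - f 0)).
by rewrite addrK subrr.
Qed.

Lemma linZ f a u : lin f -> f (a *: u) = a *: f u.
Proof. by move=> hf; rewrite -[a *: u]addr0 hf lin0 // addr0. Qed.

Lemma linD f u v : lin f -> f (u + v) = f u + f v.
Proof. by move=> hf; rewrite -{1}[u]scale1r hf scale1r. Qed.

Lemma linB f u v : lin f -> f (u - v) = f u - f v.
Proof. by move=> hf; rewrite -scaleN1r linD // linZ // scaleN1r. Qed.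

Lemma lin_sum f (I : Type) (r : seq I) (F : I -> V) :
  lin f -> f (\sum_(i <- r) F i) = \sum_(i <- r) f (F i).
Proof.
move=> hf; elim: r => [|i r IH]; first by rewrite !big_nil lin0.
by rewrite !big_cons linD // IH.
Qed.

Lemma subspace0 S : subspace S -> S 0.
Proof. by case. Qed.

Lemma subspaceZ S a u : subspace S -> S u -> S (a *: u).
Proof. by move=> [h0 hS] hu; rewrite -[_ *: _]addr0; apply: hS. Qed.

Lemma subspaceD S u v : subspace S -> S u -> S v -> S (u + v).
Proof. by move=> [_ hS] hu hv; rewrite -[u]scale1r; apply: hS. Qed.

Lemma subspaceB S u v : subspace S -> S u -> S v -> S (u - v).
Proof. by move=> hS hu hv; rewrite -scaleN1r; apply: subspaceD => //; apply: subspaceZ. Qed.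

Lemma subspace_sum S (I : eqType) (r : seq I) (F : I -> V) : subspace S ->
  (forall i, i \in r -> S (F i)) -> S (\sum_(i <- r) F i).
Proof.
move=> hS; elim: r => [|i r IH] hF; first by rewrite big_nil; apply: subspace0.
rewrite big_cons; apply: subspaceD => //; first by apply: hF; rewrite mem_head.
by apply: IH => j hj; apply: hF; rewrite in_cons hj orbT.
Qed.

Lemma subspace_zero : subspace (fun v : V => v = 0).
Proof. by split=> // a u v -> ->; rewrite scaler0 addr0. Qed.

End LinearMaps.

Section FiniteDimension.
Variable V : lmodType CC.
Implicit Types (s b : seq V) (P : V -> Prop).

Definition span_seq s v :=
  exists a : 'I_(size s) -> CC, v = \sum_(i < size s) a i *: s`_i.

Definition free_seq s := forall a : 'I_(size s) -> CC,
  \sum_(i < size s) a i *: s`_i = 0 -> forall i, a i = 0.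

Definition basis_of P n (b : 'I_n -> V) :=
  [/\ forall i, P (b i),
      forall a : 'I_n -> CC, \sum_(i < n) a i *: b i = 0 -> forall i, a i = 0 &
      forall v, P v -> exists a : 'I_n -> CC, v = \sum_(i < n) a i *: b i].

Lemma subspace_span s : subspace (span_seq s).
Proof.
split; first by exists (fun=> 0); rewrite big1 // => i _; rewrite scale0r.
move=> c _ _ [a ->] [a' ->]; exists (fun i => c * a i + a' i).
by rewrite scaler_sumr -big_split; apply: eq_bigr => i _; rewrite scalerDl scalerA.
Qed.

Lemma span_seq_mem s x : x \in s -> span_seq s x.
Proof.
move=> /(nthP 0) [i lt_i <-]; exists (fun j => (val j == i)%:R).
rewrite (bigD1 (Ordinal lt_i)) //= eqxx scale1r big1 ?addr0 // => j.
by rewrite -val_eqE /= => /negbTE ->; rewrite scale0r.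
Qed.

Lemma span_seq_cons x s v : span_seq s v -> span_seq (x :: s) v.
Proof.
move=> [a ->]; exists (fun i => if unlift ord0 i is Some j then a j else 0).
rewrite big_ord_recl /= unlift_none scale0r add0r.
by apply: eq_bigr => i _; rewrite liftK.
Qed.

Lemma span_seq_trans s b v : {in s, forall x, span_seq b x} -> span_seq s v -> span_seq b v.
Proof.
move=> sb [a ->]; apply: subspace_sum (subspace_span b) _ => i _.
exact/(subspaceZ _ (subspace_span b))/sb/mem_nth.
Qed.

Lemma free_seq_cons x b : free_seq b -> ~ span_seq b x -> free_seq (x :: b).
Proof.
move=> freeb nspan a /=; rewrite big_ord_recl /= => ha.
have a0 : a ord0 = 0.
  apply/eqP; apply: contraT => nz_a0; case: nspan.
  exists (fun i => - (a ord0)^-1 * a (lift ord0 i)).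
  have -> : x = - (a ord0)^-1 *: \sum_(i < size b) a (lift ord0 i) *: b`_i.
    by rewrite -(addKr (a ord0 *: x) (\sum__ _)) ha addr0 scalerN scaleNr opprK scalerK.
  by rewrite scaler_sumr; apply: eq_bigr => i _; rewrite scalerA.
move: ha; rewrite a0 scale0r add0r => /freeb a_lift i.
by case: (unliftP ord0 i) => [j ->|->].
Qed.

Lemma free_subseq_span s :
  exists b, [/\ {subset b <= s}, free_seq b & {in s, forall x, span_seq b x}].
Proof.
elim: s => [|x s [b [sbs freeb spanb]]]; first by exists [::]; split=> // a _ [].
have [xb | nxb] := classic (span_seq b x).
  exists b; split=> // y; first by move/sbs; rewrite in_cons => ->; rewrite orbT.
  by rewrite in_cons => /orP [/eqP -> | /spanb].
exists (x :: b); split.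
- by move=> y; rewrite !in_cons => /orP [->|/sbs ->]; rewrite ?orbT.
- exact: free_seq_cons.
- move=> y; rewrite in_cons => /orP [/eqP -> | /spanb]; last exact: span_seq_cons.
  by apply: span_seq_mem; rewrite mem_head.
Qed.

Lemma fin_dim_basis P : fin_dim P -> exists n (b : 'I_n -> V), basis_of P b.
Proof.
move=> [s [sP spanP]]; have [b [sbs freeb spanb]] := free_subseq_span s.
exists (size b), (fun i => b`_i); split=> // [i | v /spanP Pv].
  exact/sP/sbs/mem_nth.
exact: span_seq_trans spanb Pv.
Qed.

Lemma qdim_basis (D : CC -> V -> V) mu n (b : 'I_n -> V) :
  basis_of (weight D mu) b -> qdim D (fun=> True) (fun v => v = 0) mu n.
Proof.
move=> [bmu bfree bspan]; exists b; split; first by move=> i; rewrite (bmu i) subrr.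
split=> // v _ /eqP; rewrite subr_eq0 => /eqP /bspan [a ->].
by exists a; rewrite subrr.
Qed.

Lemma qdim_full_gt0 (D : CC -> V -> V) mu n :
  qdim D (fun=> True) (fun v => v = 0) mu n -> in_supp D mu -> (0 < n)%N.
Proof.
case: n => // [[b [_ [_ bspan]]]] [v [nz_v wv]].
have [|a] := bspan v I; first by rewrite wv subrr.
by rewrite big_ord0 subr0 => v0; rewrite v0 eqxx in nz_v.
Qed.

Lemma qdim_witness (D : CC -> V -> V) (X X' : V -> Prop) mu n :
  qdim D X X' mu n -> (0 < n)%N -> exists v, [/\ X v, X' (D 0 v - mu *: v) & ~ X' v].
Proof.
move=> [b [hb [bfree _]]] n_gt0; set i0 := Ordinal n_gt0.
have [Xb X'b] := hb i0; exists (b i0); split=> // X'b0.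
suff /bfree/(_ i0)/eqP : X' (\sum_(i < n) (i == i0)%:R *: b i) by rewrite eqxx oner_eq0.
by rewrite (bigD1 i0) //= scale1r big1 ?addr0 // => i /negbTE ->; rewrite scale0r.
Qed.

End FiniteDimension.

Section WeightDecomposition.
Variables (V : lmodType CC) (D : CC -> V -> V).
Hypothesis linD0 : lin (D 0).
Implicit Types (s : seq (CC * V)) (g : CC -> CC) (S : V -> Prop).

Definition weighted s := forall p, p \in s -> weight D p.1 p.2.

Definition wcomb g s : V := \sum_(p <- s) g p.1 *: p.2.

Definition wscale g s := [seq (p.1, g p.1 *: p.2) | p <- s].

Lemma wcomb_cons g p s : wcomb g (p :: s) = g p.1 *: p.2 + wcomb g s.
Proof. by rewrite /wcomb big_cons. Qed.

Lemma wcomb_cat g s1 s2 : wcomb g (s1 ++ s2) = wcomb g s1 + wcomb g s2.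
Proof. by rewrite /wcomb big_cat. Qed.

Lemma eq_wcomb g1 g2 s : g1 =1 g2 -> wcomb g1 s = wcomb g2 s.
Proof. by move=> eq_g; apply: eq_bigr => p _; rewrite eq_g. Qed.

Lemma wcombD g1 g2 s : wcomb g1 s + wcomb g2 s = wcomb (fun x => g1 x + g2 x) s.
Proof. by rewrite /wcomb -big_split; apply: eq_bigr => p _; rewrite scalerDl. Qed.

Lemma wcombB g1 g2 s : wcomb g1 s - wcomb g2 s = wcomb (fun x => g1 x - g2 x) s.
Proof. by rewrite /wcomb -sumrB; apply: eq_bigr => p _; rewrite scalerBl. Qed.

Lemma wcombZ a g s : a *: wcomb g s = wcomb (fun x => a * g x) s.
Proof. by rewrite /wcomb scaler_sumr; apply: eq_bigr => p _; rewrite scalerA. Qed.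

Lemma wcomb_wscale g1 g2 s : wcomb g1 (wscale g2 s) = wcomb (fun x => g1 x * g2 x) s.
Proof. by rewrite /wcomb big_map; apply: eq_bigr => p _; rewrite scalerA. Qed.

Lemma weightZ nu a v : weight D nu v -> weight D nu (a *: v).
Proof. by rewrite /weight => h; rewrite linZ // h !scalerA mulrC. Qed.

Lemma subspace_weight nu : subspace (weight D nu).
Proof.
split=> [|a u v]; first by rewrite /weight lin0 // scaler0.
by rewrite /weight => hu hv; rewrite linD0 hu hv scalerDr !scalerA mulrC.
Qed.

Lemma weighted_wscale g s : weighted s -> weighted (wscale g s).
Proof. by move=> hs q /mapP [p /hs hp ->]; apply: weightZ. Qed.

Lemma weighted_cat s1 s2 : weighted s1 -> weighted s2 -> weighted (s1 ++ s2).
Proof. by move=> h1 h2 p; rewrite mem_cat => /orP []; [apply: h1 | apply: h2]. Qed.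

Lemma D0_wcomb g s : weighted s -> D 0 (wcomb g s) = wcomb (fun x => x * g x) s.
Proof.
move=> hs; rewrite /wcomb lin_sum // !big_seq; apply: eq_bigr => p /hs hp.
by rewrite linZ // hp scalerA mulrC.
Qed.

Lemma D0_subr_wcomb mu s : weighted s ->
  D 0 (wcomb (fun=> 1) s) - mu *: wcomb (fun=> 1) s
  = wcomb (fun=> 1) (wscale (fun x => x - mu) s).
Proof.
move=> hs; rewrite D0_wcomb // wcombZ wcombB wcomb_wscale.
by apply: eq_wcomb => x; rewrite !mulr1 mul1r.
Qed.

(* [D 0 - mu] kills the [mu]-term; the others are recovered by induction with
   coefficients [(g x - g mu) / (x - mu)], whose product with [x - mu] is
   [g x - g mu] even at [x = mu], where [0 / 0 = 0]. *)
Lemma wcomb_closed S s : subspace S -> (forall v, S v -> S (D 0 v)) ->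
  weighted s -> S (wcomb (fun=> 1) s) -> forall g, S (wcomb g s).
Proof.
move=> hS hSD; have [n] := ubnP (size s); elim: n s => // n IH [|[mu v] s] /= hn hw hv g.
  by rewrite /wcomb big_nil; apply: subspace0.
have hws : weighted s by move=> p hp; apply: hw; rewrite in_cons hp orbT.
set t := wscale (fun x => x - mu) s.
have ht : S (wcomb (fun=> 1) t).
  have <- : D 0 (wcomb (fun=> 1) ((mu, v) :: s)) - mu *: wcomb (fun=> 1) ((mu, v) :: s)
      = wcomb (fun=> 1) t.
    by rewrite D0_subr_wcomb // wcomb_cons /= subrr scale0r scaler0 add0r.
  exact: subspaceB hS (hSD _ hv) (subspaceZ _ hS hv).
have := IH t _ (weighted_wscale hws) ht (fun x => (g x - g mu) / (x - mu)).
rewrite wcomb_wscale size_map => /(_ hn) hrest.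
have -> : wcomb g ((mu, v) :: s) = g mu *: wcomb (fun=> 1) ((mu, v) :: s)
    + wcomb (fun x => (g x - g mu) / (x - mu) * (x - mu)) s.
  rewrite !wcomb_cons /= scale1r scalerDr -addrA wcombZ wcombD; congr (_ + _).
  apply: eq_wcomb => x; have [->|neq_x] := eqVneq x mu.
    by rewrite !subrr !mulr0 mulr1 addr0.
  by rewrite divfK ?subr_eq0 // mulr1 addrC subrK.
exact: subspaceD hS (subspaceZ _ hS hv) hrest.
Qed.

Lemma wcomb_uniq s1 s2 g : weighted s1 -> weighted s2 ->
  wcomb (fun=> 1) s1 = wcomb (fun=> 1) s2 -> wcomb g s1 = wcomb g s2.
Proof.
move=> hs1 hs2 eq_s; apply/eqP; rewrite -subr_eq0; apply/eqP.
have hw := weighted_cat hs1 (weighted_wscale (g := fun=> -1) hs2).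
have hD0 v : v = 0 -> D 0 v = 0 by move->; apply: lin0.
have wN h s : wcomb h (wscale (fun=> -1) s) = - wcomb h s.
  by rewrite wcomb_wscale -scaleN1r wcombZ; apply: eq_wcomb => x; rewrite mulrC.
have := wcomb_closed (subspace_zero V) hD0 hw _ g.
by rewrite !wcomb_cat !wN eq_s subrr => /(_ erefl).
Qed.

Hypothesis decomposable : forall v, wspan D (fun=> True) v.

Definition wdec v : seq (CC * V) :=
  proj1_sig (constructive_indefinite_description _ (decomposable v)).

Lemma wdecP v : weighted (wdec v) /\ v = wcomb (fun=> 1) (wdec v).
Proof.
rewrite /wdec; case: constructive_indefinite_description => s /= [hs hv].
split; first by move=> p /hs [].
by rewrite hv; apply: eq_bigr => p _; rewrite scale1r.
Qed.

Definition wproj nu v := wcomb (fun x => (x == nu)%:R) (wdec v).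

Lemma wprojE nu v s : weighted s -> v = wcomb (fun=> 1) s ->
  wproj nu v = wcomb (fun x => (x == nu)%:R) s.
Proof. by move=> hs hv; have [hw hdec] := wdecP v; apply: wcomb_uniq; rewrite -?hdec. Qed.

Lemma wproj_weight nu v : weight D nu (wproj nu v).
Proof.
have [hw _] := wdecP v; rewrite /weight D0_wcomb // wcombZ.
by apply: eq_wcomb => x; case: eqP => [->|]; rewrite ?mulr0 ?mulr1.
Qed.

Lemma wproj_weightE nu mu v : weight D mu v -> wproj nu v = (mu == nu)%:R *: v.
Proof.
move=> hv; rewrite (@wprojE nu v [:: (mu, v)]) ?/wcomb ?big_seq1 ?scale1r //.
by move=> p; rewrite mem_seq1 => /eqP ->.
Qed.

Lemma lin_wproj nu : lin (wproj nu).
Proof.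
move=> a u v; have [hu du] := wdecP u; have [hv dv] := wdecP v.
rewrite (@wprojE nu _ (wscale (fun=> a) (wdec u) ++ wdec v)).
- rewrite wcomb_cat wcomb_wscale /wproj wcombZ; congr (_ + _).
  by apply: eq_wcomb => x; rewrite mulrC.
- by apply: weighted_cat => //; apply: weighted_wscale.
rewrite {1}du {1}dv wcomb_cat wcomb_wscale wcombZ.
by congr (_ + _); apply: eq_wcomb => x; rewrite mulrC.
Qed.

Lemma wproj_closed S nu v : subspace S -> (forall u, S u -> S (D 0 u)) ->
  S v -> S (wproj nu v).
Proof.
move=> hS hSD; have [hw hv] := wdecP v; rewrite {1}hv => Sv.
exact: wcomb_closed hS hSD hw Sv _.
Qed.

Lemma wproj_near S mu v : subspace S -> (forall u, S u -> S (D 0 u)) ->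
  S (D 0 v - mu *: v) -> S (v - wproj mu v).
Proof.
move=> hS hSD; have [hw hv] := wdecP v; rewrite /wproj {1 2 3}hv D0_subr_wcomb // => hsh.
have := wcomb_closed hS hSD (weighted_wscale hw) hsh (fun x => (x - mu)^-1).
rewrite wcomb_wscale wcombB; congr S; apply: eq_wcomb => x.
have [->|neq_x] := eqVneq x mu; first by rewrite subrr mulr0 subrr.
by rewrite mulVf ?subr_eq0 // subr0.
Qed.

End WeightDecomposition.

Section Words.
Variables (V : lmodType CC) (D : CC -> V -> V) (Cop : V -> V).
Implicit Types (H : CC -> Prop) (w : seq (option CC)).

Lemma word_in_cons H l w : word_in H (l :: w) <->
  (if l is Some x then H x else True) /\ word_in H w.
Proof.
split=> [hw | [hl hw] l']; last by rewrite in_cons => /orP [/eqP -> | /hw].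
by split=> [|l' hl']; apply: hw; rewrite ?mem_head ?in_cons ?hl' ?orbT.
Qed.

Lemma word_in_rcons H w l : word_in H w -> (if l is Some x then H x else True) ->
  word_in H (rcons w l).
Proof. by move=> hw hl l'; rewrite mem_rcons in_cons => /orP [/eqP -> | /hw]. Qed.

Lemma word_in_mono H1 H2 w : (forall x, H1 x -> H2 x) -> word_in H1 w -> word_in H2 w.
Proof. by move=> sH hw l /hw; case: l => // x /sH. Qed.

Lemma word_act_rcons w l v :
  word_act D Cop (rcons w l) v = word_act D Cop w (word_act D Cop [:: l] v).
Proof. by rewrite /word_act foldr_rcons. Qed.

Lemma submodule_word_act H X w v : submodule H D Cop X -> word_in H w -> X v ->
  X (word_act D Cop w v).
Proof.
move=> [_ [XD XC]]; elim: w => [|[x|] w IH] // /word_in_cons [hl hw] hv /=.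
  by apply: XD => //; apply: IH.
by apply: XC; apply: IH.
Qed.

End Words.

Section VirasoroModule.
Variables (V : lmodType CC) (G : CC -> Prop) (D : CC -> V -> V) (Cop : V -> V).
Hypotheses (HG : is_subgroup G) (Hvir : vir_module G D Cop).
Implicit Types (H : CC -> Prop) (S X Y : V -> Prop) (w : seq (option CC)).

Lemma lin_D x : G x -> lin (D x).
Proof. by case: Hvir => _ [+ _]; apply. Qed.

Lemma lin_Cop : lin Cop.
Proof. by case: Hvir. Qed.

Lemma lin_D0 : lin (D 0).
Proof. exact: lin_D (subgroup0 HG). Qed.

(* [d_0, d_x] = x d_x: the central term vanishes since 0^3 - 0 = 0. *)
Lemma weight_D x nu v : G x -> weight D nu v -> weight D (nu + x) (D x v).
Proof.
move=> Gx hv; case: Hvir => _ [_ [_ bracket]].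
have := bracket 0 x v (subgroup0 HG) Gx; rewrite hv linZ; last exact: lin_D.
rewrite add0r subr0 expr0n /= subrr mul0r scale0r if_same addr0.
by move/eqP; rewrite subr_eq => /eqP h; rewrite /weight h scalerDl addrC.
Qed.

Lemma weight_Cop nu v : weight D nu v -> weight D nu (Cop v).
Proof.
case: Hvir => _ [_ [DC _]] hv.
by rewrite /weight -DC ?hv ?linZ //; [exact: lin_Cop | exact: subgroup0].
Qed.

Lemma lin_word_act w : word_in G w -> lin (word_act D Cop w).
Proof.
elim: w => [|l w IH] //= /word_in_cons [hl hw] a u v /=.
rewrite IH //; case: l hl => [x Gx|_]; [exact: lin_D | exact: lin_Cop].
Qed.

Lemma weight_word_act w nu v : word_in G w -> weight D nu v ->
  weight D (nu + word_weight w) (word_act D Cop w v).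
Proof.
elim: w => [|l w IH] /=; first by rewrite /word_weight big_nil addr0.
move=> /word_in_cons [hl hw] hv; rewrite /word_weight big_cons -/(word_weight w).
case: l hl => [x Gx|_] /=; last by rewrite add0r; apply/weight_Cop/IH.
by rewrite addrCA addrC; apply/weight_D/IH.
Qed.

Lemma U_gen_sub H S v : S v -> U_gen H D Cop S v.
Proof.
move=> hv; exists [:: (1, [::], v)]; rewrite big_seq1 scale1r; split=> //.
by move=> p; rewrite mem_seq1 => /eqP ->.
Qed.

Lemma U_gen_mono H1 H2 S v : (forall x, H1 x -> H2 x) ->
  U_gen H1 D Cop S v -> U_gen H2 D Cop S v.
Proof.
move=> sH [s [hs ->]]; exists s; split=> // p /hs [hw hp].
by split=> //; apply: word_in_mono hw.
Qed.

Lemma U_gen_min H S X v : submodule H D Cop X -> (forall u, S u -> X u) ->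
  U_gen H D Cop S v -> X v.
Proof.
move=> hX sSX [s [hs ->]]; have [hXs _] := hX.
apply: subspace_sum => // p /hs [hw hp]; apply: subspaceZ => //.
exact: submodule_word_act hX hw (sSX _ hp).
Qed.

Lemma U_gen_submodule H S : (forall x, H x -> G x) -> submodule H D Cop (U_gen H D Cop S).
Proof.
move=> sHG; have U_gen_letter l (s : seq (CC * seq (option CC) * V)) :
    (if l is Some x then H x else True) ->
    (forall p, p \in s -> word_in H p.1.2 /\ S p.2) ->
    U_gen H D Cop S (word_act D Cop [:: l] (\sum_(p <- s) p.1.1 *: word_act D Cop p.1.2 p.2)).
  move=> hl hs; exists [seq (p.1.1, l :: p.1.2, p.2) | p <- s]; split.
    by move=> _ /mapP [p /hs [hw hp] ->]; split=> //; apply/word_in_cons.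
  rewrite big_map lin_sum; last by case: l hl => [x /sHG|_]; [exact: lin_D | exact: lin_Cop].
  apply: eq_bigr => p _; rewrite linZ //.
  by case: l hl => [x /sHG|_]; [exact: lin_D | exact: lin_Cop].
split; [split | split].
- by exists [::]; rewrite big_nil.
- move=> a _ _ [s [hs ->]] [t [ht ->]].
  exists ([seq (a * p.1.1, p.1.2, p.2) | p <- s] ++ t); split.
    by move=> p; rewrite mem_cat => /orP [/mapP [q /hs hq ->] | /ht].
  rewrite big_cat big_map scaler_sumr; congr (_ + _).
  by apply: eq_bigr => p _; rewrite scalerA.
- by move=> x _ Hx [s [hs ->]]; apply: (U_gen_letter (Some x)).
- by move=> _ [s [hs ->]]; apply: (U_gen_letter None).
Qed.

Lemma submodule_cap H X Y : submodule H D Cop X -> submodule H D Cop Y ->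
  submodule H D Cop (fun v => X v /\ Y v).
Proof.
move=> [[X0 XS] [XD XC]] [[Y0 YS] [YD YC]]; split; [split | split] => //.
- by move=> a u v [? ?] [? ?]; split; [apply: XS | apply: YS].
- by move=> x v hx [? ?]; split; [apply: XD | apply: YD].
- by move=> v [? ?]; split; [apply: XC | apply: YC].
Qed.

Lemma submodule_add H X Y : (forall x, H x -> G x) ->
  submodule H D Cop X -> submodule H D Cop Y ->
  submodule H D Cop (fun v => exists u, X u /\ Y (v - u)).
Proof.
move=> sHG [hX [XD XC]] [hY [YD YC]]; split; [split | split].
- by exists 0; rewrite subrr; split; apply: subspace0.
- move=> a v1 v2 [u1 [Xu1 Yv1]] [u2 [Xu2 Yv2]]; exists (a *: u1 + u2).
  split; first by case: hX => _; apply.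
  rewrite opprD addrACA -scalerBr; by case: hY => _; apply.
- move=> x v Hx [u [Xu Yvu]]; exists (D x u); split; first exact: XD.
  by rewrite -linB; [apply: YD | apply/lin_D/sHG].
- move=> v [u [Xu Yvu]]; exists (Cop u); split; first exact: XC.
  by rewrite -linB; [apply: YC | apply: lin_Cop].
Qed.

Lemma submodule_wspan_coset H lam : is_subgroup H -> (forall x, H x -> G x) ->
  submodule H D Cop (wspan D (fun x => H (x - lam))).
Proof.
move=> HH sHG; split; [split | split].
- by exists [::]; rewrite big_nil.
- move=> a _ _ [s [hs ->]] [t [ht ->]].
  exists ([seq (p.1, a *: p.2) | p <- s] ++ t); split.
    move=> p; rewrite mem_cat => /orP [/mapP [q /hs [hq1 hq2] ->] | /ht //].
    by split=> //; apply: weightZ => //; exact: lin_D0.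
  by rewrite big_cat big_map scaler_sumr.
- move=> x _ Hx [s [hs ->]]; exists [seq (p.1 + x, D x p.2) | p <- s]; split.
    move=> _ /mapP [p /hs [hp1 hp2] ->] /=; split; first by rewrite addrAC; apply: subgroupD.
    by apply: weight_D => //; apply: sHG.
  by rewrite big_map lin_sum //; apply/lin_D/sHG.
- move=> _ [s [hs ->]]; exists [seq (p.1, Cop p.2) | p <- s]; split.
    by move=> _ /mapP [p /hs [hp1 hp2] ->]; split=> //; apply: weight_Cop.
  by rewrite big_map lin_sum //; apply: lin_Cop.
Qed.

Lemma submodule_D0 H X : is_subgroup H -> submodule H D Cop X -> forall v, X v -> X (D 0 v).
Proof. by move=> HH [_ [XD _]] v; apply: XD; apply: subgroup0. Qed.

Lemma submodule_weight_dichotomy GI H mu Y :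
  (forall x, GI x -> H x) -> (forall x, H x -> G x) ->
  irreducible_U0 GI D Cop mu -> submodule H D Cop Y ->
  (forall v, Y v -> weight D mu v -> v = 0) \/ (forall v, weight D mu v -> Y v).
Proof.
move=> sGIH sHG [_ irr] hY; have [[Y0 YS] _] := hY.
have [w0 wS] := subspace_weight lin_D0 mu.
case: (irr (fun v => Y v /\ weight D mu v)).
- by split=> // a u v [Yu wu] [Yv wv]; split; [apply: YS | apply: wS].
- by move=> v [].
- move=> w v hw w_0 [Yv wv]; split; first exact: submodule_word_act hY (word_in_mono sGIH hw) Yv.
  have hwG : word_in G w by apply: word_in_mono hw => x /sGIH /sHG.
  by have := weight_word_act hwG wv; rewrite w_0 addr0.
- by move=> Y0mu; left=> v Yv wv; apply: Y0mu.
- by move=> muY; right=> v /muY [].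
Qed.

Section MaximalSubquotient.
Variables (H : CC -> Prop) (lam : CC).
Hypotheses (HH : is_subgroup H) (sHG : forall x, H x -> G x).
Hypothesis decomposable : forall v, wspan D (fun=> True) v.

Let M := wspan D (fun x => H (x - lam)).
Let Ulam := U_gen H D Cop (weight D lam).
Let pr := wproj decomposable lam.

Definition bot_sq v := M v /\ forall w, word_in H w -> pr (word_act D Cop w v) = 0.

Definition top_sq v := exists u, Ulam u /\ bot_sq (v - u).

Let M_submodule : submodule H D Cop M := submodule_wspan_coset lam HH sHG.
Let Ulam_submodule : submodule H D Cop Ulam := U_gen_submodule _ sHG.
Let lin_pr : lin pr := lin_wproj lin_D0 decomposable lam.

Lemma bot_sq_submodule : submodule H D Cop bot_sq.
Proof.
have [[M0 MS] [MD MC]] := M_submodule.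
have lin_w w : word_in H w -> lin (word_act D Cop w).
  by move=> hw; apply/lin_word_act/(word_in_mono sHG).
split; [split | split].
- by split=> // w /lin_w hw; rewrite !lin0.
- move=> a u v [Mu pru] [Mv prv]; split; first exact: MS.
  by move=> w hw; rewrite (lin_w _ hw) lin_pr pru // prv // scaler0 addr0.
- move=> x v Hx [Mv prv]; split; first exact: MD.
  by move=> w hw; have := prv _ (word_in_rcons (l := Some x) hw Hx); rewrite word_act_rcons.
- move=> v [Mv prv]; split; first exact: MC.
  by move=> w hw; have := prv _ (word_in_rcons (l := None) hw I); rewrite word_act_rcons.
Qed.

Lemma bot_sq_weight v : bot_sq v -> weight D lam v -> v = 0.
Proof.
move=> [_ prv] wv; have := prv [::] (fun l (hl : l \in [::]) => match notF hl with end).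
by rewrite /= /pr (wproj_weightE lin_D0 decomposable lam wv) eqxx scale1r.
Qed.

Lemma bot_sq_max X : submodule H D Cop X -> (forall v, X v -> M v) ->
  (forall v, X v -> weight D lam v -> v = 0) -> forall v, X v -> bot_sq v.
Proof.
move=> hX XM Xlam v Xv; split=> [|w hw]; first exact: XM.
apply: Xlam; last exact: wproj_weight lin_D0 _ _ _.
apply: wproj_closed; [exact: lin_D0 | by case: hX | exact: submodule_D0 HH hX |].
exact: submodule_word_act hX hw Xv.
Qed.

Lemma top_sq_submodule : submodule H D Cop top_sq.
Proof. exact: submodule_add sHG Ulam_submodule bot_sq_submodule. Qed.

Lemma top_sq_M v : top_sq v -> M v.
Proof.
have [hM _] := M_submodule.
move=> [u [Uu [Mvu _]]]; rewrite -(subrK u v); apply: subspaceD hM Mvu _.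
apply: U_gen_min M_submodule _ Uu => {}u wu; exists [:: (lam, u)]; rewrite big_seq1.
split=> // p; rewrite mem_seq1 => /eqP -> /=; rewrite subrr; split=> //.
exact: subgroup0.
Qed.

Lemma bot_sq_top v : bot_sq v -> top_sq v.
Proof.
by move=> bv; exists 0; rewrite subr0; split=> //; case: Ulam_submodule => [[]].
Qed.

Hypothesis dichotomy_lam : forall Y, submodule H D Cop Y ->
  (forall v, Y v -> weight D lam v -> v = 0) \/ (forall v, weight D lam v -> Y v).

Lemma subquotient_separates_weight X X' : submodule H D Cop X -> submodule H D Cop X' ->
  (exists v, [/\ X v, X' (D 0 v - lam *: v) & ~ X' v]) ->
  (forall v, weight D lam v -> X v) /\ (forall v, X' v -> weight D lam v -> v = 0).
Proof.
move=> hX hX' [v [Xv X'v nX'v]].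
have [[hXs _] [hX's _]] := (hX, hX').
have Xc : X (pr v) by apply: wproj_closed => //; [exact: lin_D0 | exact: submodule_D0 hX].
have X'vc : X' (v - pr v).
  by apply: wproj_near => //; [exact: lin_D0 | exact: submodule_D0 hX'].
have nX'c : ~ X' (pr v) by move=> X'c; apply: nX'v; rewrite -(subrK (pr v) v); apply: subspaceD.
have wc : weight D lam (pr v) by apply: wproj_weight lin_D0 _ _ _.
split; first case: (dichotomy_lam hX) => // Xlam.
  by exfalso; apply: nX'c; rewrite (Xlam _ Xc wc); apply: subspace0.
by case: (dichotomy_lam hX') => // lamX'; exfalso; apply/nX'c/lamX'.
Qed.

Hypothesis supp_lam : in_supp D lam.

Lemma irreducible_top_sq : irreducible_quot H D Cop top_sq bot_sq.
Proof.
have [v0 [nz_v0 wv0]] := supp_lam; split.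
  exists v0; split; last by move/bot_sq_weight/(_ wv0)/eqP; rewrite (negbTE nz_v0).
  exists v0; split; first exact: U_gen_sub.
  by rewrite subrr; case: bot_sq_submodule => [[]].
move=> X hX botX Xtop; case: (dichotomy_lam hX) => [Xlam | lamX].
  by left; apply: bot_sq_max hX _ Xlam => v /Xtop /top_sq_M.
right=> v [u [Uu bvu]]; rewrite -(subrK u v); have [hXs _] := hX.
exact: subspaceD hXs (botX _ bvu) (U_gen_min hX lamX Uu).
Qed.

Section IrreducibleSubquotient.
Variables X X' : V -> Prop.
Hypotheses (hXX' : subquotient H D Cop M X X') (irrX : irreducible_quot H D Cop X X').
Hypotheses (lamX : forall v, weight D lam v -> X v)
  (X'lam : forall v, X' v -> weight D lam v -> v = 0).

Lemma subquotient_bot_sq v : X' v -> bot_sq v.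
Proof.
have [_ [hX' [X'X XM]]] := hXX'.
by move: v; apply: bot_sq_max hX' _ X'lam => u /X'X /XM.
Qed.

Lemma subquotient_top_sq v : X v -> top_sq v.
Proof.
have [v0 [nz_v0 wv0]] := supp_lam.
have [hX [hX' [X'X _]]] := hXX'; have [[hXs _] [hX's _]] := (hX, hX').
pose Y u := exists u', Ulam u' /\ X' (u - u').
have hY : submodule H D Cop Y := submodule_add sHG Ulam_submodule hX'.
have X'Y u : X' u -> Y u.
  by exists 0; rewrite subr0; split=> //; case: Ulam_submodule => [[]].
have YX u : Y u -> X u.
  move=> [u' [Uu' X'uu']]; rewrite -(subrK u' u).
  exact: subspaceD hXs (X'X _ X'uu') (U_gen_min hX lamX Uu').
move=> Xv; have [Y_X'|X_Y] := (irrX.2 _ hY X'Y YX).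
  have /X'lam/(_ wv0)/eqP : X' v0.
    by apply: Y_X'; exists v0; rewrite subrr; split; [exact: U_gen_sub | exact: subspace0].
  by rewrite (negbTE nz_v0).
have [u [Uu X'vu]] := X_Y v Xv.
by exists u; split=> //; apply: subquotient_bot_sq.
Qed.

Lemma subquotient_cap_bot_sq v : X v -> bot_sq v -> X' v.
Proof.
have [v0 [nz_v0 wv0]] := supp_lam.
have [hX [_ [X'X _]]] := hXX'.
have X'Xb u : X' u -> X u /\ bot_sq u.
  by move=> X'u; split; [apply: X'X | apply: subquotient_bot_sq].
move=> Xv bv; have [Xb_X'|X_Xb] :=
  irrX.2 _ (submodule_cap hX bot_sq_submodule) X'Xb (fun u => @proj1 _ _).
  exact: Xb_X'.
by case/eqP: nz_v0; apply: (bot_sq_weight _ wv0); have [] := X_Xb _ (lamX wv0).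
Qed.

Lemma quot_iso_top_sq : quot_iso H D Cop X X' top_sq bot_sq.
Proof.
have [hbot _] := bot_sq_submodule.
exists id; split=> //; split; first exact: subquotient_top_sq.
split; first exact: subquotient_bot_sq.
split; first by move=> x v _ _; rewrite subrr; apply: subspace0 hbot.
split; first by move=> v _; rewrite subrr; apply: subspace0 hbot.
split; first exact: subquotient_cap_bot_sq.
move=> w [u [Uu bwu]]; exists u; split; first exact: U_gen_min hXX'.1 lamX Uu.
by rewrite -opprB -scaleN1r; apply: subspaceZ.
Qed.

End IrreducibleSubquotient.

Lemma qdim_top_sq mu n (b : 'I_n -> V) :
  (forall Y, submodule H D Cop Y ->
     (forall v, Y v -> weight D mu v -> v = 0) \/ (forall v, weight D mu v -> Y v)) ->
  (forall v, weight D mu v -> Ulam v) ->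
  (forall v, weight D lam v -> U_gen H D Cop (weight D mu) v) ->
  basis_of (weight D mu) b -> qdim D top_sq bot_sq mu n.
Proof.
move=> dichotomy_mu muU lamU [bmu bfree bspan].
have [v0 [nz_v0 wv0]] := supp_lam.
have [hbot _] := bot_sq_submodule.
have hmu := subspace_weight lin_D0 mu.
have bot_mu : forall v, bot_sq v -> weight D mu v -> v = 0.
  case: (dichotomy_mu _ bot_sq_submodule) => [//|mu_bot].
  case/eqP: nz_v0; apply: (bot_sq_weight _ wv0).
  exact: U_gen_min bot_sq_submodule mu_bot (lamU _ wv0).
exists b; split.
  move=> i; rewrite (bmu i) subrr; split; last exact: subspace0 hbot.
  by exists (b i); rewrite subrr; split; [apply: muU | apply: subspace0 hbot].
split=> [a /bot_mu ba | v _ bv].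
  apply/bfree/ba/(subspace_sum hmu) => i _.
  exact/(subspaceZ _ hmu)/bmu.
have [a pr_v] := bspan _ (wproj_weight lin_D0 decomposable mu v).
exists a; rewrite -pr_v; apply: wproj_near => //.
  exact: lin_D0.
exact: submodule_D0 bot_sq_submodule.
Qed.

End MaximalSubquotient.

End VirasoroModule.

Theorem lemma3p2 (V : lmodType CC) (G : CC -> Prop) (D : CC -> V -> V)
  (Cop : V -> V) (I : seq CC) (GI G' : CC -> Prop) :
  is_subgroup G -> rank_ge G 2 ->
  vir_module G D Cop -> harish_chandra G D Cop ->
  irreducible_vir G D Cop -> nontrivial G D Cop ->
  (forall mu, mu \in I -> in_supp D mu) ->
  is_subgroup GI -> (forall x, GI x -> G x) ->
  (exists k : nat, (0 < k)%N /\ iso_Zk GI k) ->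
  (forall mu mu', mu \in I -> mu' \in I ->
     (forall v, U_gen GI D Cop (weight D mu) v <-> U_gen GI D Cop (weight D mu') v)
     /\ GI (mu - mu')) ->
  (forall mu, mu \in I -> irreducible_U0 GI D Cop mu) ->
  is_subgroup G' -> (forall x, GI x -> G' x) -> (forall x, G' x -> G x) ->
  forall lam, lam \in I ->
  exists W W' : V -> Prop,
    subquotient G' D Cop (wspan D (fun x => G' (x - lam))) W W' /\
    irreducible_quot G' D Cop W W' /\
    (forall mu, mu \in I -> exists n : nat,
        qdim D (fun _ => True) (fun v => v = 0) mu n /\ qdim D W W' mu n) /\
    (forall X X' : V -> Prop,
        subquotient G' D Cop (wspan D (fun x => G' (x - lam))) X X' ->
        irreducible_quot G' D Cop X X' ->
        (forall mu, mu \in I -> exists n : nat,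
            qdim D (fun _ => True) (fun v => v = 0) mu n /\ qdim D X X' mu n) ->
        quot_iso G' D Cop X X' W W').
Proof.
move=> HG _ Hvir [_ [decomposable fin_weights]] _ _ supp _ _ _ U_I irr_I HG' sGIG' sG'G.
move=> lam lam_I.
have dichotomy mu : mu \in I -> forall Y, submodule G' D Cop Y ->
    (forall v, Y v -> weight D mu v -> v = 0) \/ (forall v, weight D mu v -> Y v).
  move=> mu_I Y hY.
  exact: (submodule_weight_dichotomy HG Hvir sGIG' sG'G (irr_I _ mu_I) hY).
have U_weight mu mu' : mu \in I -> mu' \in I ->
    forall v, weight D mu v -> U_gen G' D Cop (weight D mu') v.
  move=> mu_I mu'_I v wv; apply: U_gen_mono sGIG' _.
  by apply/(U_I _ _ mu_I mu'_I).1; apply: U_gen_sub.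
exists (top_sq Cop G' lam decomposable), (bot_sq Cop G' lam decomposable).
split; [|split; [|split]].
- split; first exact (top_sq_submodule HG Hvir lam HG' sG'G decomposable).
  split; first exact (bot_sq_submodule HG Hvir lam HG' sG'G decomposable).
  split=> v; [exact (bot_sq_top Hvir sG'G (v := v)) | exact (top_sq_M HG Hvir HG' sG'G (v := v))].
- exact (irreducible_top_sq HG Hvir HG' sG'G decomposable (dichotomy _ lam_I) (supp _ lam_I)).
- move=> mu mu_I; have [n [b hb]] := fin_dim_basis (fin_weights mu).
  exists n; split; first exact: qdim_basis hb.
  exact (qdim_top_sq HG Hvir HG' sG'G decomposable (supp _ lam_I) (dichotomy _ mu_I)
    (U_weight _ _ mu_I lam_I) (U_weight _ _ lam_I mu_I) hb).
- move=> X X' hXX' irrX dimX; have [n [full_n X_n]] := dimX _ lam_I.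
  have [[hX [hX' _]] n_gt0] := (hXX', qdim_full_gt0 full_n (supp _ lam_I)).
  have [lamX X'lam] := subquotient_separates_weight HG Hvir HG' decomposable (dichotomy _ lam_I)
    hX hX' (qdim_witness X_n n_gt0).
  exact (quot_iso_top_sq HG Hvir HG' sG'G decomposable (supp _ lam_I) hXX' irrX lamX X'lam).
Qed.
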